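(* Let $R$ be a ring. Let $P$ be a polygon divided into subpolygons $P^1$ and $P^2$ by the dissection $\{(t,v),(v,t)\}$; let $V^\alpha$ be the vertex set of $P^\alpha$ and $U^\alpha=V^\alpha\setminus\{t,v\}$. Let $D^2$ be a dissection of $P^2$ and $D=\{(t,v),(v,t)\}\,\dot\cup\,D^2$. Let $c:\operatorname{diag}P\to R$ be a map with $c_{rs}\in R^*$ for all $(r,s)\in D$. Then for $i\in U^1$ and $k\in U^2$, \[ \sum_{p\in\mathscr{P}(D,i,k)}c_p=c_{it}c_{vt}^{-1}\sum_{q\in\mathscr{P}(D^2,v,k)}c_q+c_{iv}c_{tv}^{-1}\sum_{q\in\mathscr{P}(D^2,t,k)}c_q, \] and for $i\in U^2$ and $k\in U^1$, \[ \sum_{p\in\mathscr{P}(D,i,k)}c_p=\Big(\sum_{q\in\mathscr{P}(D^2,i,t)}c_q\Big)c_{vt}^{-1}c_{vk}+\Big(\sum_{q\in\mathscr{P}(D^2,i,v)}c_q\Big)c_{tv}^{-1}c_{tk}. \] Here $\mathscr{P}(D^2,\cdot,\cdot)$ refers to $T$-paths in the polygon $P^2$ with respect to $D^2$.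
   Context: $R^*$ denotes the invertible elements of $R$. A polygon is a finite set of at least three vertices with a cyclic ordering, thought of as a convex polygon in the plane; a subpolygon is a subset of at least three vertices with induced cyclic ordering. $\operatorname{diag}P$ is the set of ordered pairs of distinct vertices; internal diagonals are those whose endpoints are not neighbours. $(i,k)$ and $(j,\ell)$ cross if $i,j,k,\ell$ are pairwise distinct with $i<j<k<\ell$ or $i<\ell<k<j$ cyclically. A dissection is a set of internal diagonals closed under reversal with no two crossing; the pair $\{(t,v),(v,t)\}$ divides $P$ into the subpolygons $P^1,P^2$ whose vertex sets are the vertices on either side of $(t,v)$ together with $t,v$. Write $c_{ik}=c(i,k)$. For a polygon $Q$ with dissection $D$, a sequence $(p_1,\ldots,p_\pi)$ of vertices of $Q$ is a $T$-path from $p_1$ to $p_\pi$ with respect to $D$ if: $p_1\ne p_\pi$; the sets $\{p_\alpha,p_{\alpha+1}\}$ ($1\le\alpha<\pi$) are pairwise different 2-element sets; no $(p_\alpha,p_{\alpha+1})$ crosses a diagonal of $D$; each $(p_{2\alpha},p_{2\alpha+1})$ is in $D$ and crosses $(p_1,p_\pi)$, with the crossing points progressing monotonically from $p_1$ to $p_\pi$. $\mathscr{P}(D,i,k)$ is the set of $T$-paths from $i$ to $k$ with respect to $D$, and $c_p=c_{p_1p_2}c_{p_3p_2}^{-1}c_{p_3p_4}\cdots c_{p_{\pi-1}p_{\pi-2}}^{-1}c_{p_{\pi-1}p_\pi}$. *)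

From HB Require Import structures.
From mathcomp Require Import all_boot all_order all_algebra.
Set Implicit Arguments. Unset Strict Implicit. Unset Printing Implicit Defensive.
Import Order.TTheory GRing.Theory Num.Theory.

(* The polygon P has vertex set 'I_n with the cyclic ordering 0 < 1 < ... < n-1 < 0.
   A subpolygon is a subset Q : {set 'I_n} with the induced cyclic ordering;
   hence crossing of diagonals between vertices of Q is the same in Q and in P. *)

Section Polygon.
Variable n : nat.
Implicit Types (a b x i k : 'I_n) (Q : {set 'I_n}) (D : {set 'I_n * 'I_n}).

Definition in_arc a b x : bool :=
  if (a <= b)%N then (a <= x <= b)%N else ((a <= x)%N || (x <= b)%N).

Definition parc a b : {set 'I_n} := [set x | in_arc a b x].

Definition sbetween a b x : bool := [&& in_arc a b x, x != a & x != b].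

Definition cross (d e : 'I_n * 'I_n) : bool :=
  let: (i, k) := d in let: (j, l) := e in
  uniq [:: i; j; k; l] &&
  ((sbetween i k j && sbetween k i l) || (sbetween i k l && sbetween k i j)).

Definition neighbours Q x y : bool :=
  [&& x \in Q, y \in Q, x != y &
      [forall z in Q, ~~ sbetween x y z] || [forall z in Q, ~~ sbetween y x z]].

Definition internal_diag Q (d : 'I_n * 'I_n) : bool :=
  [&& d.1 \in Q, d.2 \in Q, d.1 != d.2 & ~~ neighbours Q d.1 d.2].

Definition is_dissection Q D : Prop :=
  [/\ forall d, d \in D -> internal_diag Q d,
      forall d, d \in D -> (d.2, d.1) \in D &
      forall d e, d \in D -> e \in D -> ~~ cross d e].

(* the closed side of the diagonal d = (a,b) containing the vertex k contains
   both endpoints of e *)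
Definition kside (d : 'I_n * 'I_n) k (e : 'I_n * 'I_n) : bool :=
  let: (a, b) := d in
  let A := if sbetween a b k then in_arc a b else in_arc b a in
  A e.1 && A e.2.

(* T-path (p_1, ..., p_pi) from i to k in Q w.r.t. D, stored 0-indexed as
   s = [:: s_0; ...; s_(pi-1)]; step j is (s_j, s_(j+1)), j = 0 .. pi-2.
   The paper's even steps alpha correspond to odd j = alpha - 1. *)
Definition is_tpath Q D i k (s : seq 'I_n) : bool :=
  let p j := nth i s j in
  let st j := (p j, p j.+1) in
  let J := iota 0 (size s).-1 in
  [&& (2 <= size s)%N, head i s == i, last i s == k, i != k,
      all (fun x => x \in Q) s,
      all (fun j => p j != p j.+1) J,
      uniq [seq [set p j; p j.+1] | j <- J],
      [forall d in D, all (fun j => ~~ cross (st j) d) J],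
      all (fun j => odd j ==> ((st j \in D) && cross (st j) (i, k))) J &
      all (fun j1 => all (fun j2 =>
             [&& odd j1, odd j2 & (j1 < j2)%N] ==> kside (st j1) k (st j2)) J) J].

Variable R : unitRingType.

Fixpoint cpath (c : 'I_n -> 'I_n -> R) (s : seq 'I_n) : R :=
  match s with
  | a :: b :: [::] => c a b
  | a :: b :: ((d :: _) as rest) => c a b * (c d b)^-1 * cpath c rest
  | _ => 0
  end.

(* Every T-path has
   at most binomial(n,2) <= n*n steps (steps are pairwise different 2-subsets),
   hence length < n*n+2, so this finite sum ranges over all T-paths, each once. *)
Definition tpath_sum Q D i k (c : 'I_n -> 'I_n -> R) : R :=
  \sum_(m < n * n + 2) \sum_(t : m.-tuple 'I_n | is_tpath Q D i k t) cpath c t.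

End Polygon.

Definition Ddiv n (t v : 'I_n) (D2 : {set 'I_n * 'I_n}) : {set 'I_n * 'I_n} :=
  [set (t, v); (v, t)] :|: D2.

(* A T-path from i outside P^2 to k inside P^2 has to get past the diagonal
   (t, v), so its first step is (i, t) or (i, v); take (i, t).  If the next
   vertex is v, dropping i and t leaves a T-path from v to k in P^2 w.r.t. D^2
   that does not start with (v, t); otherwise replacing i by v gives one that
   does.  Together with their obvious inverses, these two maps identify the
   T-paths through (i, t) with all T-paths from v to k in P^2, and both
   multiply the weight by c_it c_vt^-1.  The crossing conditions survive
   because a diagonal of P^2 that avoids v crosses (i, k) exactly when it
   crosses (v, k).  The second identity is the first one for reversed paths,
   whose weights are computed in the opposite ring. *)

From HB Require Import structures.
From mathcomp Require Import all_boot all_order all_algebra zify.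
Set Implicit Arguments. Unset Strict Implicit. Unset Printing Implicit Defensive.
Import GRing.Theory.

(** * Cyclic order on the vertices *)

Section CyclicOrder.
Variable n : nat.
Implicit Types a b i k u x y z w : 'I_n.

Lemma crossE i k j l : cross (i, k) (j, l) =
  [&& (i : nat) != j, (i : nat) != k, (i : nat) != l, (j : nat) != k,
      (j : nat) != l, (k : nat) != l &
      (sbetween i k j && sbetween k i l) || (sbetween i k l && sbetween k i j)].
Proof. by rewrite /cross /= !inE !negb_or -!andbA. Qed.

Lemma ksideE a b k x y : kside (a, b) k (x, y) =
  (sbetween a b k && (in_arc a b x && in_arc a b y)) ||
  (~~ sbetween a b k && (in_arc b a x && in_arc b a y)).
Proof. by rewrite /kside /=; case: (sbetween a b k); rewrite ?orbF. Qed.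

Lemma ord_eqE x y : (x == y) = ((x : nat) == y). Proof. by []. Qed.

Ltac arc_lia :=
  rewrite ?ksideE ?crossE /sbetween ?ord_eqE /in_arc;
  repeat (case: ifP => ?); lia.

Lemma in_arc_l a b : in_arc a b a. Proof. arc_lia. Qed.
Lemma in_arc_r a b : in_arc a b b. Proof. arc_lia. Qed.

Lemma in_arc_both a b x : in_arc a b x -> in_arc b a x -> (x == a) || (x == b).
Proof. arc_lia. Qed.

Lemma crossC (d e : 'I_n * 'I_n) : cross d e = cross e d.
Proof. case: d e => [i k] [j l]; apply/idP/idP; arc_lia. Qed.

Lemma cross_swapl x y (e : 'I_n * 'I_n) : cross (y, x) e = cross (x, y) e.
Proof. case: e => [j l]; apply/idP/idP; arc_lia. Qed.

Lemma cross_disjoint x y z w :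
  cross (x, y) (z, w) -> [&& x != z, x != w, y != z & y != w].
Proof.
by rewrite crossE !ord_eqE => /and5P[-> _ -> zy /and3P[_ -> _]]; rewrite eq_sym zy.
Qed.

Lemma ncross_share x y z w :
  [|| x == z, x == w, y == z | y == w] -> ~~ cross (x, y) (z, w).
Proof. by apply: contraL => /cross_disjoint; rewrite !negb_or. Qed.

Lemma cross_sbetween x y p q :
  uniq [:: x; y; p; q] -> cross (x, y) (p, q) = (sbetween x y p != sbetween x y q).
Proof. rewrite /= !inE !ord_eqE => h; apply/idP/idP; move: h; arc_lia. Qed.

Lemma cross_uniq x y z w : cross (x, y) (z, w) -> uniq [:: x; y; z; w].
Proof. by rewrite crossE /= !inE !ord_eqE => /and5P[? ? ? ? /and3P[? ? _]]; lia. Qed.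

Lemma sbetween_outside_end a b i u x y :
  ~~ in_arc a b i -> in_arc a b x -> in_arc a b y -> (u == a) || (u == b) ->
  u != x -> u != y -> sbetween x y i = sbetween x y u.
Proof. move=> h1 h2 h3 h4 h5 h6; apply/idP/idP; move: h1 h2 h3 h4 h5 h6; arc_lia. Qed.

Lemma ncross_arc_chord a b x y :
  in_arc a b x -> in_arc a b y -> ~~ cross (a, b) (x, y).
Proof. arc_lia. Qed.

Lemma ncross_outside_end a b i u x y :
  ~~ in_arc a b i -> in_arc a b x -> in_arc a b y -> (u == a) || (u == b) ->
  ~~ cross (i, u) (x, y).
Proof. arc_lia. Qed.

Lemma cross_outside_end a b i u x y k :
  ~~ in_arc a b i -> in_arc a b x -> in_arc a b y -> in_arc a b k ->
  (u == a) || (u == b) -> u != x -> u != y ->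
  cross (x, y) (i, k) = cross (x, y) (u, k).
Proof.
move=> iN xA yA kA uE ux uy.
have [<-|uk] := eqVneq u k.
  by rewrite crossC (negbTE (ncross_outside_end iN xA yA uE)) crossE eqxx !andbF.
have uniq_mid p : p != x -> p != y -> p != k ->
    uniq [:: x; y; p; k] = uniq [:: x; y; k].
  by move=> px py pk; rewrite /= !inE ![_ == p]eq_sym (negbTE px) (negbTE py) pk.
have iA z : in_arc a b z -> i != z by move=> zA; apply: contraNneq iN => ->.
have [xyk|] := boolP (uniq [:: x; y; k]); last first.
  by move=> N; apply/idP/idP => /cross_uniq; rewrite uniq_mid ?(negbTE N) ?iA.
rewrite !cross_sbetween ?uniq_mid ?iA //.
by rewrite (sbetween_outside_end iN xA yA uE).
Qed.

Lemma kside_cross_neq x y u k e1 e2 :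
  cross (x, y) (u, k) -> kside (x, y) k (e1, e2) -> (e1 != u) && (e2 != u).
Proof. arc_lia. Qed.

Lemma kside_arc a b k x y :
  in_arc a b k -> k != a -> k != b -> in_arc a b x -> in_arc a b y ->
  kside (a, b) k (x, y).
Proof. arc_lia. Qed.

Lemma cross_arc_chord a b i k :
  ~~ in_arc a b i -> in_arc a b k -> k != a -> k != b -> a != b ->
  cross (a, b) (i, k).
Proof. arc_lia. Qed.

Lemma kside_swapl a b k (e : 'I_n * 'I_n) :
  k != a -> k != b -> kside (b, a) k e = kside (a, b) k e.
Proof. case: e => x y kA kB; apply/idP/idP; move: kA kB; arc_lia. Qed.

Lemma kside_swapr (d : 'I_n * 'I_n) k x y : kside d k (y, x) = kside d k (x, y).
Proof. by case: d => a b; rewrite /kside /= andbC. Qed.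

Lemma kside_rev a b x y i k :
  kside (a, b) k (x, y) -> cross (a, b) (i, k) -> cross (x, y) (i, k) ->
  kside (x, y) i (a, b).
Proof.
(* Fixing the three relative orders first keeps the search of [lia] small. *)
rewrite !ksideE !crossE /sbetween ?ord_eqE /in_arc.
case: (ltngtP a b) => ?; case: (ltngtP x y) => ?; case: (ltngtP i k) => ? /=; lia.
Qed.

End CyclicOrder.

Arguments cross {n} d e : simpl never.
Arguments cpath {n R} c s : simpl never.
Arguments kside {n} d k e : simpl never.

(** * Steps of a vertex sequence *)

Section Steps.
Variable T : Type.
Implicit Types (s : seq T) (x y : T).

Definition steps s : seq (T * T) := zip s (behead s).

Lemma steps_cons2 x y s : steps [:: x, y & s] = (x, y) :: steps (y :: s).
Proof. by []. Qed.

Lemma size_steps s : size (steps s) = (size s).-1.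
Proof. by case: s => [|x s] //=; rewrite size_zip /= minnE; lia. Qed.

Lemma nth_steps x0 s j : (j < (size s).-1)%N ->
  nth (x0, x0) (steps s) j = (nth x0 s j, nth x0 s j.+1).
Proof.
by move=> lt_j; rewrite nth_zip_cond -/(steps s) size_steps lt_j nth_behead.
Qed.

Lemma steps_iota x0 s :
  steps s = [seq (nth x0 s j, nth x0 s j.+1) | j <- iota 0 (size s).-1].
Proof.
apply: (@eq_from_nth _ (x0, x0)) => [|j]; first by rewrite size_map size_iota size_steps.
by rewrite size_steps => lt_j; rewrite nth_steps // (nth_map 0) ?size_iota // nth_iota.
Qed.

Lemma steps_rev s : steps (rev s) = rev (map (fun e => (e.2, e.1)) (steps s)).
Proof.
case: s => [|x0 s1] //; set s := x0 :: s1.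
apply: (@eq_from_nth _ (x0, x0)) => [|j].
  by rewrite size_rev size_map !size_steps size_rev.
rewrite size_steps size_rev => lt_j.
have lt_s : (0 < size s)%N by [].
rewrite nth_rev ?size_map ?size_steps // (nth_map (x0, x0)) ?size_steps; last lia.
rewrite [LHS]nth_steps ?size_rev // [in RHS]nth_steps; last lia.
by rewrite !nth_rev; try lia; congr pair; congr nth; lia.
Qed.

Definition odds (l : seq T) : seq T := mask (map odd (iota 0 (size l))) l.

Lemma odds_cons x y l : odds (x :: l) = odds (y :: l).
Proof. by []. Qed.

Lemma odds_cons2 x y l : odds [:: x, y & l] = y :: odds l.
Proof.
rewrite /odds /= -[iota 2 _]/(iota (2 + 0) _) iotaDl -map_comp.
by congr (_ :: mask _ _); apply: eq_map => j /=; rewrite negbK.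
Qed.

Lemma odds_rcons l x :
  odds (rcons l x) = if odd (size l) then rcons (odds l) x else odds l.
Proof.
rewrite /odds size_rcons -addn1 iotaD map_cat cats1 mask_rcons; last first.
  by rewrite size_map size_iota.
by case: ifP => _; rewrite ?cats1 ?cats0.
Qed.

Lemma odds_rev l : odd (size l) -> odds (rev l) = rev (odds l).
Proof.
move=> odd_l; rewrite /odds rev_mask ?size_map ?size_iota // size_rev.
congr mask; apply: (@eq_from_nth _ false) => [|j]; rewrite ?size_rev //.
rewrite size_map size_iota => lt_j.
rewrite nth_rev ?size_map ?size_iota // !(nth_map 0) ?size_iota; try lia.
by rewrite !nth_iota; try lia; rewrite add0n oddB // odd_l /= negbK.
Qed.

End Steps.

Arguments steps {T} s : simpl never.
Arguments odds {T} l : simpl never.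

Lemma odds_map (T U : Type) (f : T -> U) l : odds (map f l) = map f (odds l).
Proof. by rewrite /odds map_mask size_map. Qed.

Lemma odds_iota N : odds (iota 0 N) = filter odd (iota 0 N).
Proof. by rewrite /odds filter_mask size_iota. Qed.

Lemma pairwise_filter_iota (r : rel nat) (p : pred nat) m N :
  pairwise r (filter p (iota m N)) =
  all (fun x => all (fun y => [&& p x, p y & (x < y)%N] ==> r x y) (iota m N))
      (iota m N).
Proof.
elim: N m => [|N IH] m //=.
have gt_m y : y \in iota m.+1 N -> (m < y)%N by rewrite mem_iota => /andP[].
rewrite ltnn !andbF /=.
have -> : all (fun x => ([&& p x, p m & (x < m)%N] ==> r x m) &&
            all (fun y => [&& p x, p y & (x < y)%N] ==> r x y) (iota m.+1 N))
           (iota m.+1 N) =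
          all (fun x => all (fun y => [&& p x, p y & (x < y)%N] ==> r x y)
                          (iota m.+1 N)) (iota m.+1 N).
  by apply: eq_in_all => x /gt_m lt_mx; rewrite ltnNge ltnW // !andbF.
rewrite -IH; case: (p m) => /=; last by rewrite all_predT.
by rewrite all_filter; congr andb; apply: eq_in_all => y /gt_m ->; rewrite andbT.
Qed.

Lemma pairwise_rev (T : Type) (r : rel T) s :
  pairwise r (rev s) = pairwise (fun x y => r y x) s.
Proof. by elim: s => //= x s IH; rewrite rev_cons pairwise_rcons all_rev IH. Qed.

Lemma all_behead_odds (T : Type) (P : pred T) x s :
  P (last x s) -> all (fun e => P e.1 && P e.2) (odds (steps (x :: s))) ->
  all P s.
Proof.
have [N] := ubnP (size s); elim: N x s => // N IH x [|y [|z s]] //.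
  by rewrite /= andbT.
rewrite steps_cons2 odds_cons2 /= ltnS => lt_s Plast /andP[/andP[-> ->] Podds].
by rewrite (IH z s) //; lia.
Qed.

Lemma last_odds (T : eqType) (x : T) l :
  ~~ odd (size l) -> l != [::] -> last x l \in odds l.
Proof.
case/lastP: l => [|l y] //; rewrite size_rcons /= negbK => odd_l _.
by rewrite odds_rcons odd_l last_rcons mem_rcons mem_head.
Qed.

Lemma head_rev (T : Type) (x : T) s : head x (rev s) = last x s.
Proof. by case/lastP: s => // s y; rewrite rev_rcons last_rcons. Qed.

Lemma last_rev (T : Type) (x : T) s : last x (rev s) = head x s.
Proof. by case: s => // y s; rewrite rev_cons last_rcons. Qed.

Lemma last_steps (T : Type) (x : T) s : (1 < size s)%N ->
  last (x, x) (steps s) = (nth x s (size s).-2, last x s).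
Proof.
move=> s2; rewrite -[LHS]nth_last size_steps nth_steps; last lia.
by rewrite -nth_last; congr (_, nth _ _ _); lia.
Qed.

Lemma mem_odds (T : eqType) (e : T) l : e \in odds l -> e \in l.
Proof. exact: mem_mask. Qed.

Lemma mem_odds_cons (T : eqType) (x e : T) l : e \in odds (x :: l) -> e \in l.
Proof. by rewrite /odds /= => /mem_mask. Qed.

Lemma mem_steps (T : eqType) (e : T * T) s :
  e \in steps s -> (e.1 \in s) && (e.2 \in s).
Proof.
elim: s => [|x [|y s] IH] //; rewrite steps_cons2 inE => /orP[/eqP-> | /IH].
  by rewrite /= !inE !eqxx orbT.
by case/andP; rewrite !inE => -> ->; rewrite !orbT.
Qed.

Lemma all_steps (T : eqType) (P : pred T) s :
  all P s -> all (fun e => P e.1 && P e.2) (steps s).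
Proof.
by move=> /allP Ps; apply/allP => e /mem_steps /andP[/Ps -> /Ps ->].
Qed.

Lemma forall_in_all (T : finType) (U : eqType) (D : {pred T}) (P : T -> U -> bool)
    (s : seq U) :
  [forall d in D, all (P d) s] = all (fun e => [forall d in D, P d e]) s.
Proof.
apply/idP/idP => [/forall_inP h | /allP h].
  by apply/allP => e es; apply/forall_inP => d dD; move/allP: (h d dD); apply.
by apply/forall_inP => d dD; apply/allP => e es; move/forall_inP: (h e es); apply.
Qed.

(** * T-paths as step lists *)

Section TPaths.
Variable n : nat.
Implicit Types (i k : 'I_n) (Q : {set 'I_n}) (D : {set 'I_n * 'I_n}) (s : seq 'I_n).

Definition edge (e : 'I_n * 'I_n) : {set 'I_n} := [set e.1; e.2].

Definition crosses_none D (e : 'I_n * 'I_n) : bool := [forall d in D, ~~ cross e d].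

(* The paper's steps (p_2α, p_2α+1) are the entries of [odds (steps s)]. *)
Lemma is_tpathE Q D i k s : is_tpath Q D i k s =
  [&& (2 <= size s)%N, head i s == i, last i s == k, i != k,
      all (fun x => x \in Q) s,
      all (fun e => e.1 != e.2) (steps s),
      uniq (map edge (steps s)),
      all (crosses_none D) (steps s),
      all (fun e => (e \in D) && cross e (i, k)) (odds (steps s)) &
      pairwise (fun e f => kside e k f) (odds (steps s))].
Proof.
rewrite /is_tpath (steps_iota i s) odds_map odds_iota !all_map -map_comp.
by rewrite all_filter pairwise_map pairwise_filter_iota /crosses_none -forall_in_all.
Qed.

Lemma edge_eq_l x y z w : edge (x, y) = edge (z, w) -> (x == z) || (x == w).
Proof. by move/setP/(_ x); rewrite /edge /= !inE eqxx => <-. Qed.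

Lemma edge_in_steps x y s : edge (x, y) \in map edge (steps s) -> x \in s.
Proof.
case/mapP => e /mem_steps /andP[e1 e2] /setP/(_ x); rewrite /edge /= set21 !inE.
by case/esym/orP => /eqP->.
Qed.

Lemma tpath_shape Q D i k s : is_tpath Q D i k s -> exists x s', s = [:: i, x & s'].
Proof.
rewrite is_tpathE; case: s => [|y [|x s]] //=; try by move=> _.
by case/andP=> /eqP-> _; exists x, s.
Qed.

Lemma tpath_last Q D i k s : is_tpath Q D i k s -> last i s = k.
Proof. by rewrite is_tpathE => /and4P[_ _ /eqP]. Qed.

Lemma crosses_none_swap D x y : crosses_none D (y, x) = crosses_none D (x, y).
Proof. by apply: eq_forallb => d; rewrite cross_swapl. Qed.

Lemma tpath_size_lt Q D i k s : is_tpath Q D i k s -> (size s < n * n + 2)%N.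
Proof.
rewrite is_tpathE => /and5P[s2 _ _ _ /and5P[_ _ /map_uniq/card_uniqP uniq_s _ _]].
have := max_card (mem (steps s)); rewrite uniq_s size_steps card_prod card_ord.
by move: s2 (size s) (n * n) => s2 m N; lia.
Qed.

Lemma tpath_odd_steps Q D i k s : is_tpath Q D i k s -> odd (size (steps s)).
Proof.
rewrite is_tpathE => /and5P[s2 _ /eqP last_k _ /and5P[_ _ _ _ /andP[odds_D _]]].
apply: contraT => even_s.
have steps_s : steps s != [::].
  by rewrite -size_eq0 size_steps -lt0n -ltnS prednK // ltnW.
have /andP[_] := allP odds_D _ (last_odds (i, i) even_s steps_s).
by rewrite last_steps // last_k => /cross_disjoint; rewrite eqxx !andbF.
Qed.

Lemma is_tpath_rev Q D i k s :
  (forall d, d \in D -> (d.2, d.1) \in D) ->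
  is_tpath Q D i k s -> is_tpath Q D k i (rev s).
Proof.
move=> symD tp; have odd_s := tpath_odd_steps tp; move: tp.
rewrite !is_tpathE steps_rev odds_rev ?size_map // !odds_map size_rev.
rewrite head_rev last_rev all_rev !all_rev !all_map map_rev rev_uniq -map_comp.
case: s odd_s => [|x s] // odd_s.
case/and5P=> -> /= /eqP-> /eqP-> ik /and5P[-> neq uq ncr /andP[oddD ks]].
rewrite !eqxx eq_sym ik /=; apply/and5P; split.
- by rewrite (eq_all (a2 := fun e => e.1 != e.2)) // => -[a b]; rewrite /= eq_sym.
- by rewrite (eq_map (g := edge)) // => -[a b]; rewrite /edge /= setUC.
- by rewrite (eq_all (a2 := crosses_none D)) // => -[a b]; rewrite /= crosses_none_swap.
- apply/allP => -[a b] /(allP oddD) /andP[/symD abD abX].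
  by rewrite /= abD cross_swapl crossC cross_swapl crossC.
rewrite pairwise_rev pairwise_map.
apply: (sub_in_pairwise (P := fun e => cross e (i, k))) ks; last first.
  by apply/allP => e /(allP oddD) /andP[].
move=> [a b] [c d] abX cdX /= ab_cd.
have /and4P[ci _ di _] := cross_disjoint cdX.
by rewrite kside_swapr kside_swapl 1?eq_sym // (kside_rev ab_cd abX cdX).
Qed.

End TPaths.

Arguments edge {n} e.

(** * Sums over T-paths *)

Section Enumeration.
Variable T : finType.

Fixpoint seqs_lt (N : nat) : seq (seq T) :=
  if N is N'.+1 then seqs_lt N' ++ [seq tval t | t : N'.-tuple T] else [::].

Lemma mem_seqs_lt N s : (s \in seqs_lt N) = (size s < N)%N.
Proof.
elim: N => [|N IH] //=; rewrite mem_cat IH ltnS (leq_eqVlt (size s)) orbC.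
have -> // : (s \in [seq tval t | t : N.-tuple T]) = (size s == N).
apply/mapP/eqP => [[t _ ->]|size_s]; first by rewrite size_tuple.
by exists (Tuple (introT eqP size_s)); rewrite ?mem_enum.
Qed.

Lemma uniq_seqs_lt N : uniq (seqs_lt N).
Proof.
elim: N => [|N IH] //=; rewrite cat_uniq IH map_inj_uniq ?enum_uniq ?andbT //=.
  by apply/hasPn => _ /mapP[t _ ->]; rewrite mem_seqs_lt size_tuple ltnn.
exact: val_inj.
Qed.

End Enumeration.

Lemma big_uniq_bij (T : eqType) (V : nmodType) (L : seq T) (P1 P2 : pred T)
    (F1 F2 : T -> V) (phi psi : T -> T) :
  uniq L -> (forall s, P1 s -> s \in L) -> (forall s, P2 s -> s \in L) ->
  (forall s, P2 s -> [/\ P1 (phi s), psi (phi s) = s & F1 (phi s) = F2 s]) ->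
  (forall s, P1 s -> P2 (psi s) /\ phi (psi s) = s) ->
  (\sum_(s <- L | P1 s) F1 s = \sum_(s <- L | P2 s) F2 s)%R.
Proof.
move=> uniq_L L1 L2 to1 to2; rewrite -big_filter -[RHS]big_filter.
have phi_inj : {in filter P2 L &, injective phi}.
  move=> x y; rewrite !mem_filter => /andP[/to1[_ + _] _] /andP[/to1[_ + _] _].
  by move=> ex ey phi_xy; rewrite -ex -ey phi_xy.
have perm_L : perm_eq (filter P1 L) (map phi (filter P2 L)).
  apply: uniq_perm; rewrite ?map_inj_in_uniq ?filter_uniq // => x.
  rewrite mem_filter; apply/andP/mapP => [[/to2[P2x <-] _] | [y]].
    by exists (psi x); rewrite // mem_filter P2x L2.
  by rewrite mem_filter => /andP[/to1[P1y _ _] _] ->; rewrite P1y L1.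
rewrite (perm_big _ perm_L) big_map; apply: eq_big_seq => x.
by rewrite mem_filter => /andP[/to1[_ _ ->]].
Qed.

Lemma tpath_sumE n (R : unitRingType) Q D i k (c : 'I_n -> 'I_n -> R) :
  tpath_sum Q D i k c =
  (\sum_(s <- seqs_lt 'I_n (n * n + 2)%N | is_tpath Q D i k s) cpath c s)%R.
Proof.
rewrite /tpath_sum; elim: (n * n + 2) => [|N IH]; first by rewrite big_ord0 big_nil.
by rewrite big_ord_recr /= IH big_cat big_map big_enum_cond.
Qed.

Section PathWeight.
Variable n : nat.
Implicit Types (s : seq 'I_n).
Local Open Scope ring_scope.

Lemma cpath_cons3 (R : unitRingType) (c : 'I_n -> 'I_n -> R) a b d s :
  cpath c [:: a, b, d & s] = c a b * (c d b)^-1 * cpath c (d :: s).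
Proof. by []. Qed.

Lemma cpath_cat2 (R : unitRingType) (c : 'I_n -> 'I_n -> R) s x y : odd (size s).-1 ->
  cpath c (s ++ [:: x; y]) = cpath c s * (c x (last x s))^-1 * c x y.
Proof.
have [N] := ubnP (size s); elim: N s => // N IH [|a [|b [|d [|e s]]]] // lt_s odd_s.
rewrite !cat_cons !cpath_cons3 -!cat_cons IH; first by rewrite !mulrA.
  by move: lt_s; rewrite /= ltnS => /ltnW.
by move: odd_s => /=; rewrite !negbK.
Qed.

Lemma cpath_rev (R : unitRingType) (c : 'I_n -> 'I_n -> R) s : odd (size s).-1 ->
  cpath (R := R^c) (fun x y => c y x) (rev s) = cpath c s.
Proof.
have [N] := ubnP (size s); elim: N s => // N IH [|a [|b [|d [|e s]]]] // lt_s odd_s.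
rewrite -[[:: a, b, d, e & s]]/([:: a; b] ++ [:: d, e & s]) rev_cat.
have odd_q : odd (size [:: d, e & s]).-1 by move: odd_s => /=; rewrite !negbK.
have lt_q : (size [:: d, e & s] < N)%N by move: lt_s; rewrite /= ltnS => /ltnW.
rewrite (cpath_cat2 (R := R^c)) ?size_rev // (IH _ lt_q odd_q) last_rev.
by rewrite -[RHS]/(c a b * (c d b)^-1 * cpath c [:: d, e & s]) -[RHS]mulrA.
Qed.

End PathWeight.

Lemma tpath_sum_rev (R : unitRingType) n Q (D : {set 'I_n * 'I_n}) i k
    (c : 'I_n -> 'I_n -> R) :
  (forall d, d \in D -> (d.2, d.1) \in D) ->
  tpath_sum Q D i k c = tpath_sum (R := R^c) Q D k i (fun x y => c y x).
Proof.
move=> symD; rewrite !tpath_sumE.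
have odd_tp j l s : is_tpath Q D j l s -> odd (size s).-1.
  by move/tpath_odd_steps; rewrite size_steps.
have mem_tp j l s : is_tpath Q D j l s -> s \in seqs_lt 'I_n (n * n + 2).
  by move/tpath_size_lt; rewrite mem_seqs_lt.
apply: (big_uniq_bij (phi := rev) (psi := rev)) (uniq_seqs_lt _ _) _ _ _ _.
- exact: mem_tp.
- exact: mem_tp.
- move=> s tp; split; [exact: is_tpath_rev | exact: revK |].
  by rewrite -{2}(revK s) cpath_rev // size_rev (odd_tp _ _ _ tp).
- by move=> s tp; split; [exact: is_tpath_rev | exact: revK].
Qed.

(** * T-paths across the dividing diagonal *)

Lemma mem_Ddiv n (t v : 'I_n) D2 d :
  (d \in Ddiv t v D2) = [|| d == (t, v), d == (v, t) | d \in D2].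
Proof. by rewrite !inE orbA. Qed.

Lemma crosses_none_Ddiv n (t v : 'I_n) D2 e : crosses_none (Ddiv t v D2) e =
  [&& ~~ cross e (t, v), ~~ cross e (v, t) & crosses_none D2 e].
Proof.
apply/forall_inP/and3P => [ncr | [tv vt /forall_inP ncr] d].
  by split; try apply/forall_inP => d dD2; apply: ncr; rewrite mem_Ddiv ?eqxx ?dD2 ?orbT.
by rewrite mem_Ddiv => /or3P[/eqP-> | /eqP-> | /ncr].
Qed.

Section DividedPolygon.
Variables (n : nat) (a b t v i k : 'I_n) (D2 : {set 'I_n * 'I_n}).
Hypothesis ends_tv : [set t; v] = [set a; b].
Hypothesis neq_tv : t != v.
Hypothesis i_out : ~~ in_arc a b i.
Hypothesis k_in : in_arc a b k.
Hypothesis neq_kt : k != t.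
Hypothesis neq_kv : k != v.
Hypothesis D2_arc : forall d, d \in D2 -> in_arc a b d.1 && in_arc a b d.2.

Local Notation D := (Ddiv t v D2).
Local Notation V2 := (parc a b).
Local Notation in_V2 e := (in_arc a b e.1 && in_arc a b e.2).

Lemma end_t : (t == a) || (t == b).
Proof. by rewrite -in_set2 -ends_tv set21. Qed.

Lemma end_v : (v == a) || (v == b).
Proof. by rewrite -in_set2 -ends_tv set22. Qed.

Lemma tv_ab : ((t, v) == (a, b)) || ((t, v) == (b, a)).
Proof.
move: neq_tv; case/orP: end_t => /eqP->; case/orP: end_v => /eqP->;
  by rewrite ?eqxx ?orbT.
Qed.

Lemma in_arc_end u : (u == a) || (u == b) -> in_arc a b u.
Proof. by case/orP => /eqP->; [apply: in_arc_l | apply: in_arc_r]. Qed.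

Lemma neq_ab : a != b.
Proof. by case/orP: tv_ab => /eqP[<- <-] //; rewrite eq_sym. Qed.

Lemma neq_k_ends : (k != a) && (k != b).
Proof. by case/orP: tv_ab => /eqP[<- <-]; rewrite neq_kt neq_kv. Qed.

Lemma cross_tv e : cross (t, v) e = cross (a, b) e.
Proof. by case/orP: tv_ab => /eqP[-> ->] //; rewrite cross_swapl. Qed.

Lemma kside_tv e : kside (t, v) k e = kside (a, b) k e.
Proof.
case/andP: neq_k_ends => ka kb.
by case/orP: tv_ab => /eqP[-> ->] //; rewrite kside_swapl.
Qed.

Lemma arc_ncross_tv e : in_V2 e -> ~~ cross e (t, v) && ~~ cross e (v, t).
Proof.
case: e => x y /andP[xA yA].
by rewrite !(crossC (x, y)) (cross_swapl t v) cross_tv ncross_arc_chord.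
Qed.

Lemma cross_tv_out x : in_arc a b x -> x != t -> x != v -> cross (t, v) (i, x).
Proof.
move=> xA xt xv; have [xa xb] : x != a /\ x != b.
  by case/orP: tv_ab => /eqP[<- <-].
by rewrite cross_tv cross_arc_chord ?neq_ab.
Qed.

Lemma crosses_none_arc e : in_V2 e -> crosses_none D e = crosses_none D2 e.
Proof. by move=> eA; rewrite crosses_none_Ddiv andbA arc_ncross_tv. Qed.

Lemma odd_step_arc e : in_V2 e -> e.1 != v -> e.2 != v ->
  (e \in D) && cross e (i, k) = (e \in D2) && cross e (v, k).
Proof.
case: e => x y /andP[xA yA] /= xv yv.
rewrite mem_Ddiv !xpair_eqE (negbTE yv) (negbTE xv) !andbF /=.
by rewrite (cross_outside_end i_out xA yA k_in end_v) 1?eq_sym.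
Qed.

Lemma odd_step_inner e :
  in_V2 e -> (e \in D2) && cross e (v, k) -> (e \in D) && cross e (i, k).
Proof.
case: e => x y e_arc /andP[e_D2 e_vk].
by have /and4P[xv _ yv _] := cross_disjoint e_vk; rewrite odd_step_arc ?e_D2.
Qed.

Lemma crosses_none_it : crosses_none D (i, t).
Proof.
rewrite crosses_none_Ddiv !ncross_share ?eqxx ?orbT //=.
apply/forall_inP => -[x y] /D2_arc /andP[xA yA].
exact: ncross_outside_end i_out xA yA end_t.
Qed.

Lemma crosses_none_tv : crosses_none D (t, v).
Proof.
rewrite crosses_none_Ddiv !ncross_share ?eqxx ?orbT //=.
apply/forall_inP => -[x y] /D2_arc /andP[xA yA].
by rewrite cross_tv ncross_arc_chord.
Qed.

Lemma Ddiv_arc e : e \in D -> in_V2 e.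
Proof.
rewrite mem_Ddiv => /or3P[/eqP-> | /eqP-> | /D2_arc //];
  by rewrite /= !in_arc_end ?end_t ?end_v.
Qed.

Lemma inner_tpath_arc s : is_tpath V2 D2 v k s -> all (in_arc a b) s.
Proof.
rewrite is_tpathE => /and5P[_ _ _ _ /andP[+ _]].
by apply: sub_all => x; rewrite inE.
Qed.

Lemma outer_tpath_behead_arc s : is_tpath setT D i k s -> all (in_arc a b) (behead s).
Proof.
rewrite is_tpathE => /and5P[_ /eqP + /eqP + _ /and5P[_ _ _ _ /andP[+ _]]].
case: s => // x s /= -> last_k odds_D; apply: (all_behead_odds (x := i)).
  by rewrite last_k.
by apply: sub_all odds_D => e /andP[/Ddiv_arc].
Qed.

Lemma inner_tpath_behead_neq s :
  is_tpath V2 D2 v k s -> all (fun x => x != v) (behead s).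
Proof.
rewrite is_tpathE => /and5P[_ /eqP + /eqP + _ /and5P[_ _ _ _ /andP[+ _]]].
case: s => // x s /= -> last_k odds_D2; apply: (all_behead_odds (x := v)).
  by rewrite last_k.
apply: sub_all odds_D2 => -[y z] /andP[_ /cross_disjoint /and4P[yv _ zv _]].
by rewrite yv zv.
Qed.

Lemma kside_neq_v x y O : in_arc a b x -> in_arc a b y -> x != v -> y != v ->
  cross (x, y) (i, k) -> all (kside (x, y) k) O ->
  all (fun e => (e.1 != v) && (e.2 != v)) O.
Proof.
move=> xA yA xv yv; rewrite (cross_outside_end i_out xA yA k_in end_v) 1?eq_sym //.
by move=> xy_vk; apply: sub_all => -[e1 e2]; apply: kside_cross_neq xy_vk.
Qed.

Lemma tpath_rehead w r :
  is_tpath V2 D2 v k [:: v, t, w & r] -> is_tpath setT D i k [:: i, t, w & r].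
Proof.
move=> tq.
have tail_arc : all (in_arc a b) [:: t, w & r] by case/andP: (inner_tpath_arc tq).
have i_edge : edge (i, t) \notin map edge (steps [:: t, w & r]).
  by apply: contra i_out => /edge_in_steps /(allP tail_arc).
have /allP L_arc := all_steps tail_arc.
have O_arc e : e \in odds ((i, t) :: steps [:: t, w & r]) -> in_V2 e.
  by move/mem_odds_cons/L_arc.
move: tq; rewrite !is_tpathE (steps_cons2 v) (steps_cons2 i) (odds_cons (v, t) (i, t)).
move: (odds _) O_arc => O O_arc; move: (steps _) i_edge L_arc => L i_edge L_arc /=.
case/and5P=> _ -> _ _ /and4P[/andP[_ ->] /andP[_ ->] /andP[_ ncr] /andP[odd_q ->]].
rewrite eqxx i_edge crosses_none_it !andbT /=; apply/and5P; split.
- by apply: contraNneq i_out => ->.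
- by rewrite !in_setT /=; apply/allP => x; rewrite in_setT.
- by apply: contraNneq i_out => ->; case/andP: tail_arc.
- by apply/allP => e e_L; rewrite crosses_none_arc ?L_arc ?(allP ncr).
- by apply/allP => e e_O; rewrite odd_step_inner ?O_arc ?(allP odd_q).
Qed.

Lemma outer_tpath_neq_v x y r :
  is_tpath setT D i k [:: i, x, y & r] -> x != v -> y != v ->
  all (fun z => z != v) [:: x, y & r].
Proof.
move=> tp xv yv; have /andP[xA /andP[yA _]] := outer_tpath_behead_arc tp.
move: tp; rewrite is_tpathE => /and5P[_ _ /eqP last_k _ /and5P[_ _ _ _ /andP[odds_D ks]]].
apply: (all_behead_odds (x := i)); first by move: last_k => /= ->.
move: odds_D ks; rewrite (steps_cons2 i) (steps_cons2 x) odds_cons2.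
move: (odds _) => O /=.
case/andP=> /andP[_ xy_ik] _ /andP[xy_ks _]; rewrite xv yv /=.
exact: kside_neq_v xA yA xv yv xy_ik xy_ks.
Qed.

Lemma tpath_rehead_inv w r : w != v ->
  is_tpath setT D i k [:: i, t, w & r] -> is_tpath V2 D2 v k [:: v, t, w & r].
Proof.
move=> wv tp; have tail_arc := outer_tpath_behead_arc tp.
have tail_v := outer_tpath_neq_v tp neq_tv wv.
have q_V2 : all (fun x => x \in V2) [:: v, t, w & r].
  apply/allP => x x_q; rewrite inE.
  by case/predU1P: x_q => [-> | /(allP tail_arc)] //; apply: in_arc_end end_v.
have v_edge : edge (v, t) \notin map edge (steps [:: t, w & r]).
  apply: contraL tail_v => /edge_in_steps v_in.
  by apply/allP => /(_ v v_in); rewrite eqxx.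
have /allP L_arc := all_steps tail_arc.
have /allP L_v := all_steps tail_v.
have O_tail e : e \in odds ((v, t) :: steps [:: t, w & r]) -> in_V2 e && (e.1 != v) && (e.2 != v).
  by move/mem_odds_cons => e_in; rewrite L_arc // -andbA L_v.
move: tp; rewrite !is_tpathE (steps_cons2 v) (steps_cons2 i) (odds_cons (i, t) (v, t)).
move: (odds _) O_tail => O O_tail; move: (steps _) v_edge L_arc => L v_edge L_arc /=.
case/and5P=> _ -> _ _ /and4P[/andP[_ ->] /andP[_ ->] /andP[_ ncr] /andP[odd_p ->]].
rewrite eqxx v_edge eq_sym neq_kv !andbT /=; apply/and4P; split.
- exact: q_V2.
- by rewrite eq_sym.
- rewrite crosses_none_swap; move: crosses_none_tv; rewrite crosses_none_Ddiv => /and3P[_ _ ->] /=.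
  by apply/allP => e e_L; rewrite -crosses_none_arc ?L_arc ?(allP ncr).
- apply/allP => e e_O; have /andP[/andP[e_arc e1v] e2v] := O_tail e e_O.
  by rewrite -odd_step_arc ?(allP odd_p).
Qed.

Lemma tpath_prepend r : head v r != t ->
  is_tpath V2 D2 v k (v :: r) -> is_tpath setT D i k [:: i, t, v & r].
Proof.
move=> r_t tq; have q_arc := inner_tpath_arc tq; have r_v := inner_tpath_behead_neq tq.
have /allP L_arc := all_steps q_arc.
have O_arc e : e \in odds (steps (v :: r)) -> in_V2 e by move/mem_odds/L_arc.
have t_arc : in_arc a b t by apply: in_arc_end end_t.
have i_edge : edge (i, t) \notin edge (t, v) :: map edge (steps (v :: r)).
  rewrite inE negb_or; apply/andP; split.
    by apply: contra i_out => /eqP/edge_eq_l/orP[]/eqP->; rewrite ?t_arc ?in_arc_end ?end_v.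
  by apply: contra i_out => /edge_in_steps /(allP q_arc).
have tv_edge : edge (t, v) \notin map edge (steps (v :: r)).
  case: r r_t r_v {tq q_arc L_arc O_arc i_edge} => // y r y_t r_v.
  rewrite steps_cons2 map_cons inE negb_or; apply/andP; split.
    by apply: contra y_t => /eqP/edge_eq_l; rewrite (negbTE neq_tv) eq_sym.
  rewrite /edge setUC; apply: contraL r_v => /edge_in_steps v_in.
  by apply/allP => /(_ v v_in); rewrite eqxx.
move: tq; rewrite !is_tpathE !steps_cons2 odds_cons2.
move: (odds _) O_arc => O O_arc; move: (steps _) i_edge tv_edge L_arc => L i_edge tv_edge L_arc /=.
case/and5P=> _ _ -> _ /and5P[_ -> -> ncr /andP[odd_q ->]].
rewrite eqxx i_edge tv_edge crosses_none_it crosses_none_tv neq_tv mem_Ddiv eqxx.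
rewrite (cross_tv_out k_in neq_kt neq_kv) !andbT /=; apply/and5P; split.
- by apply: contraNneq i_out => ->.
- by rewrite !in_setT /=; apply/allP => x; rewrite in_setT.
- by apply: contraNneq i_out => ->.
- by apply/allP => e e_L; rewrite crosses_none_arc ?L_arc ?(allP ncr).
apply/andP; split; first by apply/allP => e e_O; rewrite odd_step_inner ?O_arc ?(allP odd_q).
case/andP: neq_k_ends => ka kb.
by apply/allP => -[x y] /O_arc /andP[xA yA]; rewrite kside_tv kside_arc.
Qed.

Lemma outer_tpath_tv_next r : is_tpath setT D i k [:: i, t, v & r] -> head v r != t.
Proof.
case: r => [|y r]; first by rewrite is_tpathE /= (eq_sym v) (negbTE neq_kv) !andbF.
rewrite is_tpathE !steps_cons2; move: (steps _) => L.
case/and5P=> _ _ _ _ /and5P[_ _ + _ _] => /= /and4P[_ tv_edge _ _].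
by apply: contraNneq tv_edge => ->; rewrite inE /edge setUC eqxx.
Qed.

Lemma outer_tpath_odds_neq_v r : is_tpath setT D i k [:: i, t, v & r] ->
  all (fun e => (e.1 != v) && (e.2 != v)) (odds (steps (v :: r))).
Proof.
case: r => [|y [|z r]] tp //; have /and5P[_ _ yA zA _] := outer_tpath_behead_arc tp.
move: tp; rewrite is_tpathE !steps_cons2 !odds_cons2; move: (odds _) => O; move: (steps _) => L.
case/and5P=> _ _ _ _ /and5P[_ + + _ /andP[+ +]] => /= /and5P[_ _ vy _ _].
case/and5P=> _ _ vy_edge _ _ /andP[_ /andP[/andP[_ yz_ik] _]] /andP[_ /andP[yz_ks _]].
have yv : y != v by rewrite eq_sym.
have zv : z != v by apply: contraNneq vy_edge => ->; rewrite inE /edge setUC eqxx.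
by rewrite yv zv (kside_neq_v yA zA yv zv yz_ik yz_ks).
Qed.

Lemma tpath_prepend_inv r :
  is_tpath setT D i k [:: i, t, v & r] -> is_tpath V2 D2 v k (v :: r).
Proof.
move=> tp; have O_v := outer_tpath_odds_neq_v tp.
have q_arc : all (in_arc a b) (v :: r) by case/andP: (outer_tpath_behead_arc tp).
have q_V2 : all (fun x => x \in V2) (v :: r) by apply: sub_all q_arc => x; rewrite inE.
have r_nil : r != [::].
  by apply: contra_neq neq_kv => r0; move: tp; rewrite r0 is_tpathE => /and5P[_ _ /eqP <-].
have /allP L_arc := all_steps q_arc.
have O_arc e : e \in odds (steps (v :: r)) -> in_V2 e by move/mem_odds/L_arc.
move: tp; rewrite !is_tpathE !steps_cons2 odds_cons2.
move: (odds _) O_v O_arc => O O_v O_arc; move: (steps _) L_arc => L L_arc /=.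
case/and5P=> _ -> _ _.
case/and5P=> /and3P[_ _ ->] /and3P[_ _ ->] /and3P[_ _ ncr] /andP[_ odd_p] /andP[_ ->].
rewrite eqxx (eq_sym v) neq_kv ltnS lt0n size_eq0 r_nil !andbT /=; apply/and3P; split.
- exact: q_V2.
- by apply/allP => e /(allP ncr); rewrite crosses_none_Ddiv => /and3P[].
- apply/allP => e e_O; have /andP[e1v e2v] := allP O_v e e_O.
  by rewrite -odd_step_arc ?O_arc ?(allP odd_p).
Qed.

Lemma tpath_second_tv s :
  is_tpath setT D i k s -> (nth i s 1 == t) || (nth i s 1 == v).
Proof.
move=> tp; have s_arc := outer_tpath_behead_arc tp; move: tp; rewrite is_tpathE.
case: s s_arc => [|y [|x s]] /=; try by move=> _.
case/andP=> x_arc _ /and5P[/eqP-> _ _ _ /and5P[_ _ /andP[ncr_ix _] _ _]].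
apply: contraLR ncr_ix => /norP[xt xv].
by rewrite crosses_none_Ddiv crossC cross_tv_out.
Qed.

Variables (R : unitRingType) (c : 'I_n -> 'I_n -> R).
Hypothesis c_vt_unit : c v t \is a GRing.unit.

Lemma tpath_sum_via_t :
  (\sum_(s <- seqs_lt 'I_n (n * n + 2)%N | is_tpath setT D i k s && (nth i s 1 == t))
     cpath c s = c i t * (c v t)^-1 * tpath_sum V2 D2 v k c)%R.
Proof.
rewrite tpath_sumE mulr_sumr.
pose phi q := if nth v q 1 == t then i :: behead q else [:: i, t & q].
pose psi p := if nth v p 2 == v then behead (behead p) else v :: behead p.
apply: (big_uniq_bij (phi := phi) (psi := psi)) (uniq_seqs_lt _ _) _ _ _ _.
- by move=> s /andP[/tpath_size_lt]; rewrite mem_seqs_lt.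
- by move=> s /tpath_size_lt; rewrite mem_seqs_lt.
- move=> q tq; have [x [q' def_q]] := tpath_shape tq; subst q.
  rewrite /phi /psi /=; have [x_t | x_t] := eqVneq x t; last first.
    by rewrite !eqxx tpath_prepend.
  subst x; case: q' tq => [/tpath_last/= t_k | w q' tq]; first by move: neq_kt; rewrite t_k eqxx.
  have /andP[_ /andP[w_v _]] := inner_tpath_behead_neq tq.
  rewrite eqxx /= (negbTE w_v) tpath_rehead //; split=> //.
  by rewrite !cpath_cons3 -!mulrA mulKr.
move=> p /andP[tp /eqP p1]; have [x [p' def_p]] := tpath_shape tp; subst p.
rewrite /= in p1; subst x.
case: p' tp => [/tpath_last/= t_k | w p' tp]; first by move: neq_kt; rewrite t_k eqxx.
rewrite /psi /phi /=; have [w_v | w_v] := eqVneq w v.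
  by subst w; rewrite /= nth0 (negbTE (outer_tpath_tv_next tp)) tpath_prepend_inv.
by rewrite /= eqxx tpath_rehead_inv.
Qed.

End DividedPolygon.

Lemma Ddiv_sym n (t v : 'I_n) D2 : Ddiv t v D2 = Ddiv v t D2.
Proof. by rewrite /Ddiv [[set (t, v); _]]setUC. Qed.

Lemma tpath_sum_across n (a b t v i k : 'I_n) (D2 : {set 'I_n * 'I_n})
    (R : unitRingType) (c : 'I_n -> 'I_n -> R) :
  [set t; v] = [set a; b] -> t != v -> ~~ in_arc a b i -> in_arc a b k ->
  k != t -> k != v -> (forall d, d \in D2 -> in_arc a b d.1 && in_arc a b d.2) ->
  c v t \is a GRing.unit -> c t v \is a GRing.unit ->
  tpath_sum setT (Ddiv t v D2) i k c =
  (c i t * (c v t)^-1 * tpath_sum (parc a b) D2 v k c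
   + c i v * (c t v)^-1 * tpath_sum (parc a b) D2 t k c)%R.
Proof.
move=> tv_ab tv i_out k_in kt kv D2_arc vt_unit tv_unit.
have vt_ab : [set v; t] = [set a; b] by rewrite setUC.
rewrite tpath_sumE (bigID (fun s => nth i s 1 == t)) /=.
rewrite (tpath_sum_via_t tv_ab) // Ddiv_sym -(tpath_sum_via_t vt_ab) ?(eq_sym v t) //.
congr (_ + _)%R; apply: eq_bigl => s; rewrite -Ddiv_sym.
case tp: is_tpath => //=.
case/orP: (tpath_second_tv tv_ab tv i_out k_in D2_arc tp) => /eqP->.
  by rewrite eqxx (negbTE tv).
by rewrite eqxx eq_sym tv.
Qed.

Lemma Ddiv_swap n (t v : 'I_n) (D2 : {set 'I_n * 'I_n}) :
  (forall d, d \in D2 -> (d.2, d.1) \in D2) ->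
  forall d, d \in Ddiv t v D2 -> (d.2, d.1) \in Ddiv t v D2.
Proof.
move=> D2_swap [x y]; rewrite !mem_Ddiv => /or3P[/eqP[-> ->] | /eqP[-> ->] | /D2_swap ->];
  by rewrite ?eqxx ?orbT.
Qed.

Local Open Scope ring_scope.

Theorem lemma2p7 (R : unitRingType) (n : nat) (t v : 'I_n)
  (V1 V2 : {set 'I_n}) (D2 : {set 'I_n * 'I_n}) (c : 'I_n -> 'I_n -> R) :
  (3 <= n)%N ->
  internal_diag [set: 'I_n] (t, v) ->
  (V1 = parc t v /\ V2 = parc v t \/ V1 = parc v t /\ V2 = parc t v) ->
  is_dissection V2 D2 ->
  (forall r s, (r, s) \in Ddiv t v D2 -> c r s \is a GRing.unit) ->
  (forall i k, i \in V1 :\: [set t; v] -> k \in V2 :\: [set t; v] ->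
     tpath_sum [set: 'I_n] (Ddiv t v D2) i k c =
       c i t * (c v t)^-1 * tpath_sum V2 D2 v k c
     + c i v * (c t v)^-1 * tpath_sum V2 D2 t k c) /\
  (forall i k, i \in V2 :\: [set t; v] -> k \in V1 :\: [set t; v] ->
     tpath_sum [set: 'I_n] (Ddiv t v D2) i k c =
       tpath_sum V2 D2 i t c * (c v t)^-1 * c v k
     + tpath_sum V2 D2 i v c * (c t v)^-1 * c t k).
Proof.
move=> _ int_tv V12 [D2_diag D2_swap _] c_unit.
have tv : t != v by case/and4P: int_tv.
have [a [b [V1_ba V2_ab tv_ab]]] :
    exists a b, [/\ V1 = parc b a, V2 = parc a b & [set t; v] = [set a; b]].
  by case: V12 => -[-> ->]; [exists v, t; rewrite setUC | exists t, v].
have D2_arc d : d \in D2 -> in_arc a b d.1 && in_arc a b d.2.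
  by move/D2_diag; rewrite V2_ab => /and4P[]; rewrite !inE => -> ->.
have vt_unit : c v t \is a GRing.unit by apply: c_unit; rewrite mem_Ddiv eqxx orbT.
have tv_unit : c t v \is a GRing.unit by apply: c_unit; rewrite mem_Ddiv eqxx.
have outer x : x \in V1 :\: [set t; v] -> ~~ in_arc a b x.
  rewrite V1_ba tv_ab !inE => /andP[ab_x x_ba]; apply: contra ab_x => x_ab.
  exact: in_arc_both x_ab x_ba.
have inner x : x \in V2 :\: [set t; v] -> [/\ in_arc a b x, x != t & x != v].
  by rewrite V2_ab !inE => /andP[/norP[]].
split=> i k /[swap].
  by case/inner => k_in kt kv /outer i_out; rewrite V2_ab (tpath_sum_across tv_ab).
move=> /outer k_out /inner[i_in it iv].
rewrite tpath_sum_rev; last exact: Ddiv_swap.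
rewrite (tpath_sum_across (R := R^c) tv_ab) // V2_ab -!tpath_sum_rev //.
by rewrite [LHS]addrC -![in RHS]mulrA.
Qed.
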